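(* Assume $\theta_i<1$ for all $i$ and $\theta_j>0$ for some $j$. Then $\mathbf 1_n/n$ is an equilibrium social power of systems (A) and (B) (i.e. $F(\mathbf 1_n/n)=\mathbf 1_n/n$) if and only if $\Theta(I_n-\Theta)^{-1}\mathbf 1_n$ is a left eigenvector of $C$ with eigenvalue $1$, i.e. $C^T\Theta(I_n-\Theta)^{-1}\mathbf 1_n=\Theta(I_n-\Theta)^{-1}\mathbf 1_n$.
   Context: Let $n\ge 2$, $\mathbf 1_n$ the all-ones vector, $I_n$ the identity matrix, $\Delta_n=\{x\in\mathbb R^n: x\ge 0,\ \mathbf 1_n^Tx=1\}$. Let $C\in\mathbb R^{n\times n}$ be a nonnegative row-stochastic matrix with zero diagonal, $\theta=(\theta_1,\dots,\theta_n)\in[0,1]^n$, $\Theta=\mathrm{diag}(\theta)$, and for $x\in\mathbb R^n$, $W(x)=\mathrm{diag}(x)+(I_n-\mathrm{diag}(x))C$. System (A): $x(s+1)=F(x(s))$, $x(0)\in\Delta_n$, where $F(x)=(I_n-\Theta)(I_n-W(x)^T\Theta)^{-1}\mathbf 1_n/n$; an equilibrium is $x^*\in\Delta_n$ with $F(x^* )=x^*$. System (B): $V(k+1)=\Theta W(x(k))V(k)+I_n-\Theta$, $x(k+1)=V(k+1)^T\mathbf 1_n/n$, with $V(0)=I_n$, $x(0)\in\Delta_n$; an equilibrium is a pair $(V^*,x^* )$ with $V^*$ row-stochastic, $x^*\in\Delta_n$, $V^*=\Theta W(x^* )V^*+I_n-\Theta$, $x^*=(V^* )^T\mathbf 1_n/n$.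 The equilibrium social powers of (A) and (B) coincide (the fixed points of $F$). *)

From HB Require Import structures.
From mathcomp Require Import all_boot all_order all_algebra.
Set Implicit Arguments. Unset Strict Implicit. Unset Printing Implicit Defensive.
Import Order.TTheory GRing.Theory Num.Theory.
Local Open Scope ring_scope.

Definition ones (R : ringType) (n : nat) : 'cV[R]_n := const_mx 1.

Definition unif (R : fieldType) (n : nat) : 'cV[R]_n := (n%:R)^-1 *: ones R n.

Definition diagc (R : ringType) (n : nat) (x : 'cV[R]_n) : 'M[R]_n :=
  diag_mx x^T.

Definition Wmat (R : ringType) (n : nat) (C : 'M[R]_n) (x : 'cV[R]_n) : 'M[R]_n :=
  diagc x + (1%:M - diagc x) *m C.

Definition Fmap (R : fieldType) (n : nat) (C : 'M[R]_n) (theta : 'cV[R]_n)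
  (x : 'cV[R]_n) : 'cV[R]_n :=
  (1%:M - diagc theta) *m invmx (1%:M - (Wmat C x)^T *m diagc theta) *m unif R n.

Definition admissible_C (R : numDomainType) (n : nat) (C : 'M[R]_n) : Prop :=
  (forall i j, 0 <= C i j) /\
  (forall i, \sum_j C i j = 1) /\
  (forall i, C i i = 0).

From HB Require Import structures.
From mathcomp Require Import all_boot all_order all_algebra.
Set Implicit Arguments. Unset Strict Implicit. Unset Printing Implicit Defensive.
Import Order.TTheory GRing.Theory Num.Theory.
Local Open Scope ring_scope.

(* At the uniform vector, W(1/n) = (1/n) I + (1 - 1/n) C is again a nonnegative
   row-stochastic matrix, so by a maximum-modulus argument M = I - W^T Theta is
   invertible.  With y = (I - Theta)^-1 1 and z = Theta y one has y = 1 + z, and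
   M y - 1 = (1 - 1/n) (z - C^T z); the fixed-point equation F(1/n) = 1/n is
   equivalent to M y = 1, hence to C^T z = z. *)

Section Stochastic.

Variables (R : realFieldType) (n : nat).

Lemma scalar_add_scale_ge0 (a : R) (C : 'M[R]_n) :
  0 <= a <= 1 -> (forall i j, 0 <= C i j) ->
  forall i j, 0 <= (a%:M + (1 - a) *: C) i j.
Proof.
move=> /andP[a0 a1] C0 i j; rewrite !mxE.
by rewrite addr_ge0 ?mulrn_wge0 ?mulr_ge0 ?subr_ge0.
Qed.

Lemma scalar_add_scale_stochastic (a : R) (C : 'M[R]_n) :
  (forall i, \sum_j C i j = 1) ->
  forall i, \sum_j (a%:M + (1 - a) *: C) i j = 1.
Proof.
move=> C1 i; under eq_bigr => j _ do rewrite !mxE.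
rewrite big_split /= -mulr_sumr C1 mulr1 (bigD1 i) //= eqxx mulr1n big1.
  by rewrite addr0 addrC subrK.
by move=> j /negbTE; rewrite eq_sym => ->; rewrite mulr0n.
Qed.

(* If v W^T Theta = v, the largest |v_i| satisfies |v_i| <= theta_i |v_i|,
   since row i of W is a probability vector; theta_i < 1 forces v = 0. *)
Lemma unitmx_1_sub_trmx_mul_diagc (W : 'M[R]_n) (theta : 'cV[R]_n) :
  (forall i j, 0 <= W i j) -> (forall i, \sum_j W i j = 1) ->
  (forall i, 0 <= theta i 0) -> (forall i, theta i 0 < 1) ->
  (1%:M - W^T *m diagc theta) \in unitmx.
Proof.
move=> W0 W1 t0 t1; rewrite -row_free_unit -kermx_eq0.
apply/rowV0P => v /sub_kermxP; rewrite mulmxBr mulmx1 mulmxA.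
move=> /eqP; rewrite subr_eq0 => /eqP fix_v.
have v_eq i : v 0 i = (\sum_k v 0 k * W i k) * theta i 0.
  rewrite {1}fix_v /diagc mul_mx_diag !mxE; congr (_ * _).
  by apply: eq_bigr => k _; rewrite mxE.
apply/matrixP => a j; rewrite mxE [a]ord1.
case: (@Order.TotalTheory.arg_maxP _ R _ j xpredT (fun i => `|v 0 i|) isT).
move=> i _ i_max.
have vi_le : `|v 0 i| <= theta i 0 * `|v 0 i|.
  rewrite {1}v_eq normrM (ger0_norm (t0 i)) mulrC ler_wpM2l //.
  apply: le_trans (ler_norm_sum _ _ _) _.
  rewrite -[leRHS]mulr1 -(W1 i) mulr_sumr; apply: ler_sum => k _.
  by rewrite normrM (ger0_norm (W0 i k)); apply: ler_wpM2r; [exact: W0 | exact: i_max].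
have vi0 : `|v 0 i| <= 0.
  have : (1 - theta i 0) * `|v 0 i| <= 0 by rewrite mulrBl mul1r subr_le0.
  by rewrite pmulr_rle0 // subr_gt0.
by apply/eqP; rewrite -normr_le0 (le_trans (i_max j isT)).
Qed.

End Stochastic.

Lemma unitmx_1_sub_diagc (R : fieldType) n (theta : 'cV[R]_n) :
  (forall i, theta i 0 != 1) -> (1%:M - diagc theta) \in unitmx.
Proof.
move=> t1.
have -> : 1%:M - diagc theta = diag_mx (\row_i (1 - theta i 0)).
  apply/matrixP => i j; rewrite !mxE.
  by case: (i == j); rewrite ?mulr1n ?mulr0n ?subr0.
rewrite unitmxE det_diag unitfE; apply/prodf_neq0 => i _.
by rewrite mxE subr_eq0 eq_sym t1.
Qed.

Lemma Wmat_unif (R : fieldType) n (C : 'M[R]_n) :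
  Wmat C (unif R n) = (n%:R^-1)%:M + (1 - n%:R^-1) *: C.
Proof.
rewrite /Wmat.
have -> : diagc (unif R n) = (n%:R^-1)%:M.
  by apply/matrixP => i j; rewrite !mxE mulr1.
by rewrite -(raddfB (@scalar_mx R n)) mul_scalar_mx.
Qed.

Lemma mulmx_invmx_fixed (R : comUnitRingType) n (T M : 'M[R]_n) (u : 'cV[R]_n) :
  T \in unitmx -> M \in unitmx ->
  (T *m invmx M *m u == u) = (M *m (invmx T *m u) == u).
Proof.
move=> Tu Mu; apply/eqP/eqP => fix_u.
  by rewrite -{1}fix_u !mulmxA mulmxKV // mulmxV // mul1mx.
by rewrite -{1}fix_u -mulmxA mulKmx // mulKVmx.
Qed.

Section Identity.

Variables (R : fieldType) (n : nat) (a : R) (C : 'M[R]_n) (theta : 'cV[R]_n).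

Let T := 1%:M - diagc theta.
Let y := invmx T *m ones R n.
Let z := diagc theta *m invmx T *m ones R n.

Lemma invmx_1_sub_diagc_ones : T \in unitmx -> y = ones R n + z.
Proof.
move=> Tu; have Ty : T *m y = ones R n by rewrite mulKVmx.
by rewrite /z -mulmxA -/y -{1}Ty mulmxBl mul1mx subrK.
Qed.

Lemma scalar_add_scale_fixed_sub :
  T \in unitmx ->
  (1%:M - (a%:M + (1 - a) *: C)^T *m diagc theta) *m y - ones R n
  = (1 - a) *: (z - C^T *m z).
Proof.
move=> Tu; have hz : diagc theta *m y = z by rewrite /z mulmxA.
rewrite mulmxBl mul1mx -mulmxA hz linearD /= tr_scalar_mx linearZ /=.
rewrite mulmxDl mul_scalar_mx -scalemxAl invmx_1_sub_diagc_ones //.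
by rewrite addrAC (addrC (ones R n)) addrK scalerBr opprD addrA !scalerBl !scale1r.
Qed.

End Identity.

Theorem corollary2 (R : realFieldType) (n : nat) (C : 'M[R]_n) (theta : 'cV[R]_n) :
  (2 <= n)%N ->
  admissible_C C ->
  (forall i, 0 <= theta i 0 <= 1) ->
  (forall i, theta i 0 < 1) ->
  (exists j, 0 < theta j 0) ->
  (Fmap C theta (unif R n) = unif R n <->
   C^T *m (diagc theta *m invmx (1%:M - diagc theta) *m ones R n)
   = diagc theta *m invmx (1%:M - diagc theta) *m ones R n).
Proof.
move=> n2 [C0 [C1 _]] t01 t1 _.
set a : R := n%:R^-1.
have n_gt0 : 0 < n%:R :> R by rewrite ltr0n (leq_trans _ n2).
have a01 : 0 <= a <= 1 by rewrite invr_ge0 ltW // invf_le1 // ler1n (leq_trans _ n2).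
have a_neq0 : a != 0 by rewrite invr_eq0 gt_eqF.
have a_neq1 : 1 - a != 0.
  by rewrite subr_eq0 eq_sym invr_eq1 pnatr_eq1; apply: contraTneq n2 => ->.
have Tu : 1%:M - diagc theta \in unitmx.
  by apply: unitmx_1_sub_diagc => i; rewrite lt_eqF.
have Mu := unitmx_1_sub_trmx_mul_diagc
  (scalar_add_scale_ge0 a01 C0) (scalar_add_scale_stochastic a C1)
  (fun i => proj1 (andP (t01 i))) t1.
rewrite /Fmap Wmat_unif.
apply: iff_trans (rwP eqP) (iff_trans _ (iff_sym (rwP eqP))).
rewrite mulmx_invmx_fixed // /unif -!scalemxAr (inj_eq (scalerI a_neq0)).
rewrite -subr_eq0 scalar_add_scale_fixed_sub // scaler_eq0 (negbTE a_neq1).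
by rewrite subr_eq0 eq_sym.
Qed.
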